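(* Let $\nu>0$ be a real number. Define integers $s_1=4$ and $s_{k+1}=\lfloor 10^{\nu s_k}\rfloor s_k+1$ for $k\ge 1$. Then for every sequence $(a_n)_{n\ge1}$ with $a_n\in\{1,2\}$ for all $n$, the real number $\xi=\sum_{n=1}^{\infty}a_n10^{-s_n}$ is a $\nu$-Liouville number. In particular $\sum_{n=1}^\infty 10^{-s_n}\in\mathbb{L}^{(\nu)}$.
   Context: A real number $\xi$ is a Liouville number if there exist a sequence of rational numbers $p_k/q_k$ ($p_k,q_k$ integers, $q_k>1$) and a sequence of positive reals $(\omega_k)_k$ with $\omega_k\to\infty$ such that $0<|\xi-p_k/q_k|<q_k^{-\omega_k}$ for all $k$. For a real number $\xi$, let $S(\xi)$ be the set of real numbers $\nu^*\ge 0$ for which there exist a sequence of rationals $p_k/q_k$ (integers $q_k>1$) and a sequence of positive reals $(\omega_k)_k$ such that $0<|\xi-p_k/q_k|<q_k^{-\omega_k}$ for all $k$ and $\omega_k/q_k^{\nu^*}\to\infty$ as $k\to\infty$. For $\nu\in[0,\infty]$, $\xi$ is called a $\nu$-Liouville number if $\xi$ is a Liouville number and $\sup S(\xi)=\nu$; the set of $\nu$-Liouville numbers is denoted $\mathbb{L}^{(\nu)}$. In particular, $\xi$ is an $\infty$-Liouville number iff $S(\xi)=[0,\infty)$. *)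

From Stdlib Require Import Reals.
From Coquelicot Require Import Coquelicot.
Open Scope R_scope.

Definition approx (xi : R) (p q : Z) (omega : R) : Prop :=
  0 < Rabs (xi - IZR p / IZR q) < Rpower (IZR q) (- omega).

Definition Liouville (xi : R) : Prop :=
  exists (p q : nat -> Z) (omega : nat -> R),
    (forall k, (1 < q k)%Z) /\ (forall k, 0 < omega k) /\
    is_lim_seq omega p_infty /\
    (forall k, approx xi (p k) (q k) (omega k)).

Definition Sset (xi : R) (nustar : R) : Prop :=
  0 <= nustar /\
  exists (p q : nat -> Z) (omega : nat -> R),
    (forall k, (1 < q k)%Z) /\ (forall k, 0 < omega k) /\
    (forall k, approx xi (p k) (q k) (omega k)) /\
    is_lim_seq (fun k => omega k / Rpower (IZR (q k)) nustar) p_infty.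

Definition nu_Liouville (nu xi : R) : Prop :=
  Liouville xi /\ is_lub (Sset xi) nu.

(* s k is s_{k+1} of the paper: s_1 = 4, s_{k+1} = floor(10^(nu s_k)) s_k + 1 *)
Fixpoint sseq (nu : R) (k : nat) : Z :=
  match k with
  | O => 4%Z
  | S k' => (Int_part (Rpower 10 (nu * IZR (sseq nu k'))) * sseq nu k' + 1)%Z
  end.

From Stdlib Require Import Reals Lra Lia ZArith.
From Coquelicot Require Import Coquelicot.
Open Scope R_scope.

(* Write s_k for the exponents (s_0 = 4 here), F_k for
   floor(10^(nu s_k)), so that s_{k+1} = F_k s_k + 1, and
   xi = sum_n a_n 10^(-s_n).  The partial sums are fractions num_k / 10^(s_k)
   and the tails satisfy 10^(-s_{k+1}) <= xi - num_k/10^(s_k) <= 3 10^(-s_{k+1}).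
   - Lower half: 10^(-s_{k+1}) = 10^(-1) (10^(s_k))^(-F_k), so the
     convergents approximate xi with exponents F_k, and
     F_k / (10^(s_k))^ns -> +oo for every 0 <= ns < nu; ns = 0 gives the
     Liouville property.
   - Upper half: for ns > nu and any fraction p/q, take the least j with
     10^(s_{j+1} - s_j) >= 6q.  Then xi is so close to the j-th convergent
     that |xi - p/q| >= 1/(2 q 10^(s_{j+1})), which forces any admissible
     exponent w to be < 2 + 4 s_{j+1}; by minimality of j and the growth of
     the sequence, s_{j+1} = O(q^ns).  So no ns > nu lies in S(xi). *)

Definition pow10 (x : R) : R := Rpower 10 x.

Lemma pow10_pos x : 0 < pow10 x.
Proof. apply exp_pos. Qed.

Lemma pow10_plus x y : pow10 (x + y) = pow10 x * pow10 y.
Proof. apply Rpower_plus. Qed.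

Lemma pow10_opp x : pow10 (- x) = / pow10 x.
Proof. apply Rpower_Ropp. Qed.

Lemma pow10_le x y : x <= y -> pow10 x <= pow10 y.
Proof. intros; apply Rle_Rpower; lra. Qed.

Lemma pow10_0 : pow10 0 = 1.
Proof. apply Rpower_O; lra. Qed.

Lemma pow10_1 : pow10 1 = 10.
Proof. apply Rpower_1; lra. Qed.

(* Bernoulli-type lower bound; it is the only quantitative fact about 10^x
   used for growth estimates. *)
Lemma pow10_lin x : 0 <= x -> 1 + x <= pow10 x.
Proof.
  intros Hx. unfold pow10, Rpower.
  assert (Hln : 1 <= ln 10).
  { rewrite <- (ln_exp 1). apply ln_le; [apply exp_pos |].
    pose proof exp_le_3; lra. }
  pose proof (exp_ineq1_le (x * ln 10)). nra.
Qed.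

Lemma pow10_nat_opp n : pow10 (- INR n) = (/ 10) ^ n.
Proof.
  rewrite pow10_opp. unfold pow10. rewrite Rpower_pow by lra.
  symmetry; apply pow_inv.
Qed.

Lemma Rpower_pow10 x y : Rpower (pow10 x) y = pow10 (x * y).
Proof. apply Rpower_mult. Qed.

Lemma IZR_Zpow10 (z : Z) : (0 <= z)%Z -> IZR (10 ^ z) = pow10 (IZR z).
Proof.
  intros Hz. rewrite <- (Z2Nat.id z Hz), <- pow_IZR, <- INR_IZR_INZ.
  unfold pow10. rewrite Rpower_pow; lra.
Qed.

Lemma Int_part_ge1 x : 1 <= x -> 1 <= IZR (Int_part x).
Proof.
  intros H. destruct (base_Int_part x) as [H1 H2].
  assert (Hpos : (0 < Int_part x)%Z) by (apply lt_IZR; lra).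
  apply IZR_le. lia.
Qed.

Lemma diverges_of_linear_lower_bound (v : nat -> R) d :
  0 < d -> (forall k, d * INR k <= v k) -> is_lim_seq v p_infty.
Proof.
  intros Hd H. apply is_lim_seq_spec. intros M.
  destruct (INR_unbounded (M / d)) as [N HN]. exists N. intros n Hn.
  apply le_INR in Hn. specialize (H n).
  assert (Hlt : M / d * d < INR n * d) by (apply Rmult_lt_compat_r; lra).
  replace (M / d * d) with M in Hlt by (field; lra). lra.
Qed.

Lemma least_index (Pr : nat -> Prop) N :
  (forall n, Pr n \/ ~ Pr n) -> Pr N ->
  exists j, Pr j /\ (j = O \/ exists i, j = S i /\ ~ Pr i).
Proof.
  intros Hdec. induction N as [|N IH]; intros HN.
  - exists O; auto.
  - destruct (Hdec N) as [h | h]; [now apply IH |].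
    exists (S N); split; auto. right; exists N; auto.
Qed.

Lemma distinct_fractions_apart (p q p' q' : Z) :
  (0 < q)%Z -> (0 < q')%Z -> IZR p / IZR q <> IZR p' / IZR q' ->
  1 / (IZR q * IZR q') <= Rabs (IZR p / IZR q - IZR p' / IZR q').
Proof.
  intros Hq Hq' Hne. apply IZR_lt in Hq, Hq'.
  assert (E : IZR p / IZR q - IZR p' / IZR q'
              = IZR (p * q' - p' * q) / (IZR q * IZR q')).
  { rewrite minus_IZR, !mult_IZR. field. lra. }
  assert (Hnum : 1 <= Rabs (IZR (p * q' - p' * q))).
  { rewrite Rabs_Zabs. apply IZR_le.
    destruct (Z.eq_dec (p * q' - p' * q) 0) as [Z0 | Z0]; [| lia].
    exfalso. apply Hne. apply (f_equal IZR) in Z0.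
    rewrite minus_IZR, !mult_IZR in Z0. field_simplify_eq; lra. }
  rewrite E. unfold Rdiv.
  rewrite Rabs_mult, Rabs_inv, (Rabs_pos_eq (IZR q * IZR q')) by nra.
  assert (0 < / (IZR q * IZR q')) by (apply Rinv_0_lt_compat; nra). nra.
Qed.

Lemma ex_series_geom_scal c : ex_series (fun m => c * (/ 10) ^ m).
Proof.
  assert (H : Rabs (/ 10) < 1) by (rewrite Rabs_pos_eq; lra).
  exact (ex_series_scal_l c _ (ex_series_geom _ H)).
Qed.

Lemma Series_nonneg (f : nat -> R) :
  (forall n, 0 <= f n) -> ex_series f -> 0 <= Series f.
Proof.
  intros H He. pose proof (Series_le (fun n => 0 * f n) f) as L.
  rewrite Series_scal_l in L.
  assert (0 * Series f <= Series f) by (apply L; auto; intros n; specialize (H n); lra).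
  lra.
Qed.

(* If 1/(2 q 10^X) < q^(-w) with q >= 2, then w is at most linear in X:
   take logarithms and use ln 10 <= 4 ln 2 <= 4 ln q. *)
Lemma exponent_bound (q : Z) (w X : R) :
  (1 < q)%Z -> 0 <= X -> 1 / (2 * IZR q * pow10 X) < Rpower (IZR q) (- w) ->
  w < 2 + 4 * X.
Proof.
  intros Hq HX H.
  assert (Hq2 : 2 <= IZR q) by (apply IZR_le; lia).
  assert (E : 2 * IZR q * pow10 X = exp (ln 2 + ln (IZR q) + X * ln 10)).
  { rewrite !exp_plus, !exp_ln by lra. reflexivity. }
  rewrite E in H. unfold Rdiv, Rpower in H.
  rewrite Rmult_1_l, <- exp_Ropp in H. apply exp_lt_inv in H.
  assert (Hln2 : 0 < ln 2) by (rewrite <- ln_1; apply ln_increasing; lra).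
  assert (Hlnq : ln 2 <= ln (IZR q)) by (apply ln_le; lra).
  assert (Hln10 : ln 10 <= 4 * ln 2).
  { replace (4 * ln 2) with (INR 4 * ln 2) by (simpl; ring).
    rewrite <- ln_pow by lra. apply ln_le; simpl; lra. }
  assert (X * ln 10 <= 4 * X * ln (IZR q)) by nra.
  apply (Rmult_lt_reg_r (ln (IZR q))); lra.
Qed.

Lemma linear_times_decay_bounded d t :
  0 < d -> 0 <= t -> (t + 1) * pow10 (- (d * t / 2)) <= 1 + 2 / d.
Proof.
  intros Hd Ht. rewrite pow10_opp.
  pose proof (pow10_pos (d * t / 2)) as HP.
  pose proof (pow10_lin (d * t / 2) ltac:(nra)) as Hlin.
  apply (Rmult_le_reg_r (pow10 (d * t / 2))); [exact HP |].
  rewrite Rmult_assoc, Rinv_l, Rmult_1_r by lra.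
  assert (Hd' : 0 < 2 / d) by (apply Rdiv_lt_0_compat; lra).
  assert (E : (1 + 2 / d) * (1 + d * t / 2) = t + 1 + (d * t / 2 + 2 / d))
    by (field; lra).
  assert ((1 + 2 / d) * (1 + d * t / 2) <= (1 + 2 / d) * pow10 (d * t / 2))
    by (apply Rmult_le_compat_l; lra).
  nra.
Qed.

Lemma Liouville_of_Sset_0 xi : Sset xi 0 -> Liouville xi.
Proof.
  intros [_ [p [q [w [Hq [Hw [Ha Hl]]]]]]].
  exists p, q, w. split; [exact Hq | split; [exact Hw | split; [| exact Ha]]].
  apply (is_lim_seq_ext (fun k => w k / Rpower (IZR (q k)) 0)); [| exact Hl].
  intros k. rewrite Rpower_O by (apply IZR_lt; specialize (Hq k); lia). field.
Qed.

Lemma not_Sset_of_uniform_bound xi ns :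
  (exists C, forall p q w, (1 < q)%Z -> approx xi p q w ->
     w <= C * Rpower (IZR q) ns) ->
  ~ Sset xi ns.
Proof.
  intros [C HC] [_ [p [q [w [Hq [_ [Ha Hl]]]]]]].
  apply is_lim_seq_spec in Hl. destruct (Hl C) as [N HN].
  specialize (HN N (Nat.le_refl N)).
  pose proof (HC _ _ _ (Hq N) (Ha N)) as Hw.
  assert (HR : 0 < Rpower (IZR (q N)) ns) by apply exp_pos.
  assert (w N / Rpower (IZR (q N)) ns <= C).
  { apply (Rmult_le_reg_r (Rpower (IZR (q N)) ns)); [exact HR |].
    unfold Rdiv. rewrite Rmult_assoc, Rinv_l by lra. lra. }
  lra.
Qed.

Lemma is_lub_of_bounds (E : R -> Prop) nu :
  0 < nu -> (forall x, 0 <= x < nu -> E x) -> (forall x, E x -> x <= nu) ->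
  is_lub E nu.
Proof.
  intros Hnu Hbelow Habove. split; [exact Habove |].
  intros b Hb. destruct (Rle_lt_dec nu b) as [h | h]; [exact h | exfalso].
  set (m := (Rmax b 0 + nu) / 2).
  assert (Hm : b < m /\ 0 <= m < nu) by (unfold m, Rmax; destruct (Rle_dec b 0); lra).
  specialize (Hb m (Hbelow m ltac:(lra))). lra.
Qed.

Section Construction.
Variable nu : R.
Hypothesis hnu : 0 < nu.

Definition sr (k : nat) : R := IZR (sseq nu k).
Definition fr (k : nat) : R := IZR (Int_part (pow10 (nu * sr k))).

Lemma sr_S k : sr (S k) = fr k * sr k + 1.
Proof. unfold sr, fr, pow10. simpl. rewrite plus_IZR, mult_IZR. reflexivity. Qed.

Lemma fr_bounds k : pow10 (nu * sr k) - 1 < fr k <= pow10 (nu * sr k).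
Proof. unfold fr. destruct (base_Int_part (pow10 (nu * sr k))). lra. Qed.

Lemma sr_fr_ge k : 4 + INR k <= sr k /\ 1 <= fr k.
Proof.
  assert (Hfr : forall k, 0 <= sr k -> 1 <= fr k).
  { intros j Hj. apply Int_part_ge1. pose proof (pow10_lin (nu * sr j)). nra. }
  induction k as [| k [IH1 IH2]].
  - assert (H0 : sr 0 = 4) by reflexivity. split; [simpl; lra | apply Hfr; lra].
  - pose proof (pos_INR k). rewrite S_INR, sr_S.
    assert (4 + (INR k + 1) <= fr k * sr k + 1) by nra.
    split; [lra |]. apply Hfr. rewrite sr_S. lra.
Qed.

Lemma sseq_nonneg k : (0 <= sseq nu k)%Z.
Proof.
  apply le_IZR. pose proof (sr_fr_ge k) as [H _]. pose proof (pos_INR k).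
  unfold sr in H. lra.
Qed.

Lemma sr_mono k m : (k <= m)%nat -> sr k + INR (m - k) <= sr m.
Proof.
  induction 1 as [| m Hkm IH].
  - rewrite Nat.sub_diag. simpl. lra.
  - rewrite Nat.sub_succ_l, S_INR, sr_S by exact Hkm.
    destruct (sr_fr_ge m). pose proof (pos_INR m).
    assert (0 <= (fr m - 1) * sr m) by (apply Rmult_le_pos; lra). lra.
Qed.

Lemma sr_S_le k : sr (S k) <= pow10 (nu * sr k) * (sr k + 1).
Proof.
  rewrite sr_S. destruct (fr_bounds k) as [_ Hf]. destruct (sr_fr_ge k) as [Hs _].
  pose proof (pos_INR k). pose proof (pow10_lin (nu * sr k) ltac:(nra)).
  assert (fr k * sr k <= pow10 (nu * sr k) * sr k)
    by (apply Rmult_le_compat_r; lra).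
  nra.
Qed.

(* The gaps s_{k+1} - s_k; 10^gap is the ratio of consecutive denominators. *)
Definition gap (k : nat) : R := sr (S k) - sr k.

Lemma gap_unbounded M : exists N, M <= gap N.
Proof.
  destruct (INR_unbounded (M / nu)) as [N HN]. exists N. unfold gap.
  rewrite sr_S. destruct (sr_fr_ge N) as [Hs Hf]. destruct (fr_bounds N) as [Hf' _].
  pose proof (pos_INR N). pose proof (pow10_lin (nu * sr N) ltac:(nra)).
  assert (HM : M / nu * nu < INR N * nu) by (apply Rmult_lt_compat_r; lra).
  replace (M / nu * nu) with M in HM by (field; lra).
  assert (0 <= (fr N - 1) * (sr N - 1)) by (apply Rmult_le_pos; lra).
  nra.
Qed.

(* For ns > nu, the quantity (s_{i+1} + 1) 10^(ns s_i - (ns - nu) s_{i+1})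
   is bounded: when floor(10^(nu s_i)) is large, s_{i+1} dominates s_i and
   the exponent is at most -(ns - nu) s_{i+1} / 2; otherwise s_i is small. *)
Lemma weighted_growth_bounded ns : nu < ns ->
  exists B, forall i,
    (sr (S i) + 1) * pow10 (ns * sr i - (ns - nu) * sr (S i)) <= B.
Proof.
  intros Hns. set (dl := ns - nu). set (K := 2 * ns / dl). set (s0 := K / nu).
  assert (Hdl : 0 < dl) by (unfold dl; lra).
  assert (HK : 0 < K) by (apply Rdiv_lt_0_compat; lra).
  exists (Rmax (1 + 2 / dl) ((K * s0 + 2) * pow10 (ns * s0))). intros i.
  destruct (sr_fr_ge i) as [Hs Hf]. pose proof (pos_INR i). pose proof (sr_S i) as ES.
  set (s := sr i) in *. set (t := sr (S i)) in *.
  assert (Ht : 4 <= t) by nra.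
  destruct (Rle_lt_dec K (fr i)) as [hbig | hsmall].
  - (* t >= K s, hence ns s <= dl t / 2 *)
    assert (Hts : K * s <= t) by nra.
    assert (HdK : dl * K = 2 * ns) by (unfold K; field; lra).
    assert (ns * s - dl * t <= - (dl * t / 2)) by nra.
    eapply Rle_trans; [| apply Rmax_l].
    eapply Rle_trans; [| apply (linear_times_decay_bounded dl t); lra].
    apply Rmult_le_compat_l; [lra | apply pow10_le; lra].
  - (* 1 + nu s <= 10^(nu s) < K + 1, hence s < s0 and t <= K s0 + 1 *)
    destruct (fr_bounds i) as [Hf' _]. fold s in Hf'.
    pose proof (pow10_lin (nu * s) ltac:(nra)).
    assert (Hs0 : s < s0).
    { unfold s0. apply (Rmult_lt_reg_l nu); [exact hnu |].
      replace (nu * (K / nu)) with K by (field; lra). lra. }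
    assert (t <= K * s0 + 1) by nra.
    eapply Rle_trans; [| apply Rmax_r].
    apply Rmult_le_compat; [lra | left; apply pow10_pos | lra |].
    apply pow10_le. nra.
Qed.

Lemma growth_controlled_by_gap ns : nu < ns ->
  exists B, 0 < B /\ forall i, sr (S (S i)) <= B * pow10 (ns * gap i).
Proof.
  intros Hns. destruct (weighted_growth_bounded ns Hns) as [B HB].
  assert (Hgrow : forall i, sr (S (S i)) <= B * pow10 (ns * gap i)).
  { intros i. eapply Rle_trans; [apply sr_S_le |].
    assert (E : pow10 (nu * sr (S i)) = pow10 (ns * sr i - (ns - nu) * sr (S i))
                                        * pow10 (ns * gap i)).
    { rewrite <- pow10_plus. f_equal. unfold gap. ring. }
    rewrite E. pose proof (pow10_pos (ns * gap i)). specialize (HB i).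
    rewrite (Rmult_comm _ (sr (S i) + 1)), <- Rmult_assoc.
    apply Rmult_le_compat_r; lra. }
  exists B. split; [| exact Hgrow].
  specialize (Hgrow O). destruct (sr_fr_ge 2) as [H2 _].
  pose proof (pow10_pos (ns * gap 0)). pose proof (pos_INR 2).
  destruct (Rle_lt_dec B 0) as [hB | hB]; [| exact hB].
  assert (B * pow10 (ns * gap 0) <= 0) by (apply Rmult_le_0_r; lra). lra.
Qed.

(* At the least j with 10^(gap_j) >= 6q, the exponent s_{j+1} is O(q^ns):
   either j = 0, or 10^(gap_{j-1}) < 6q and growth_controlled_by_gap applies. *)
Lemma exponent_at_least_index_bounded ns : nu < ns ->
  exists M, forall (q : Z) j, (1 < q)%Z ->
    (j = O \/ exists i, j = S i /\ ~ 6 * IZR q <= pow10 (gap i)) ->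
    sr (S j) <= M * Rpower (IZR q) ns.
Proof.
  intros Hns. destruct (growth_controlled_by_gap ns Hns) as [B [HB Hgrow]].
  exists (sr 1 + B * Rpower 6 ns). intros q j Hq Hj.
  apply IZR_lt in Hq.
  assert (HR : 1 <= Rpower (IZR q) ns).
  { rewrite <- (Rpower_O (IZR q)) by lra. apply Rle_Rpower; lra. }
  assert (H6 : 0 < B * Rpower 6 ns) by (apply Rmult_lt_0_compat; [exact HB | apply exp_pos]).
  destruct (sr_fr_ge 1) as [Hs1 _]. pose proof (pos_INR 1).
  destruct Hj as [-> | [i [-> Hi]]].
  - nra.
  - apply Rnot_le_lt in Hi. eapply Rle_trans; [apply Hgrow |].
    rewrite (Rmult_comm ns), <- Rpower_pow10.
    assert (Rpower (pow10 (gap i)) ns <= Rpower 6 ns * Rpower (IZR q) ns).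
    { rewrite Rpower_mult_distr by lra.
      apply Rle_Rpower_l; [lra | split; [apply pow10_pos | lra]]. }
    assert (B * Rpower (pow10 (gap i)) ns <= B * (Rpower 6 ns * Rpower (IZR q) ns))
      by (apply Rmult_le_compat_l; lra).
    assert (0 <= sr 1 * Rpower (IZR q) ns) by (apply Rmult_le_pos; lra).
    lra.
Qed.

Variable a : nat -> Z.
Hypothesis ha : forall n, a n = 1%Z \/ a n = 2%Z.

Definition u (n : nat) : R := IZR (a n) * pow10 (- sr n).

(* Since s_{k+m} >= s_k + m, the tail from k is dominated by a geometric series. *)
Lemma term_bounds k m :
  pow10 (- sr (k + m)) <= u (k + m) <= 2 * pow10 (- sr k) * (/ 10) ^ m.
Proof.
  unfold u. pose proof (sr_mono k (k + m) ltac:(lia)) as H.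
  replace (k + m - k)%nat with m in H by lia.
  assert (Hle : pow10 (- sr (k + m)) <= pow10 (- sr k) * (/ 10) ^ m).
  { rewrite <- pow10_nat_opp, <- pow10_plus. apply pow10_le. lra. }
  pose proof (pow10_pos (- sr (k + m))).
  destruct (ha (k + m)) as [E | E]; rewrite E; simpl; split; nra.
Qed.

Lemma ex_series_tail k : ex_series (fun m => u (k + m)).
Proof.
  apply (@ex_series_le R_AbsRing R_CompleteNormedModule _
           (fun m => 2 * pow10 (- sr k) * (/ 10) ^ m)).
  - intros m. change (norm (u (k + m))) with (Rabs (u (k + m))).
    destruct (term_bounds k m). pose proof (pow10_pos (- sr (k + m))).
    rewrite Rabs_pos_eq; lra.
  - apply ex_series_geom_scal.
Qed.

Lemma ex_series_u : ex_series u.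
Proof. exact (ex_series_tail 0). Qed.

Definition xi : R := Series u.
Definition tail (k : nat) : R := Series (fun m => u (S k + m)).

Lemma tail_bounds k : pow10 (- sr (S k)) <= tail k <= 3 * pow10 (- sr (S k)).
Proof.
  unfold tail. split.
  - rewrite Series_incr_1 by apply ex_series_tail.
    assert (Hrest : 0 <= Series (fun m => u (S k + S m))).
    { apply Series_nonneg.
      - intros n. destruct (term_bounds (S k) (S n)).
        pose proof (pow10_pos (- sr (S k + S n))). lra.
      - apply (ex_series_ext (fun m => u (S (S k) + m))); [intros n; f_equal; lia |].
        apply ex_series_tail. }
    destruct (term_bounds (S k) 0) as [H0 _]. rewrite Nat.add_0_r in H0 |- *. lra.
  - eapply Rle_trans.
    + apply (Series_le _ (fun m => 2 * pow10 (- sr (S k)) * (/ 10) ^ m));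
        [| apply ex_series_geom_scal].
      intros m. destruct (term_bounds (S k) m).
      pose proof (pow10_pos (- sr (S k + m))). lra.
    + rewrite Series_scal_l, Series_geom by (rewrite Rabs_pos_eq; lra).
      pose proof (pow10_pos (- sr (S k))). lra.
Qed.

(* The k-th partial sum is num_k / 10^(s_k). *)
Fixpoint num (k : nat) : Z :=
  match k with
  | O => a O
  | S k' => (num k' * 10 ^ (sseq nu (S k') - sseq nu k') + a (S k'))%Z
  end.
Definition den (k : nat) : Z := (10 ^ sseq nu k)%Z.

Lemma den_val k : IZR (den k) = pow10 (sr k).
Proof. apply IZR_Zpow10, sseq_nonneg. Qed.

Lemma den_gt1 k : (1 < den k)%Z.
Proof.
  apply lt_IZR. rewrite den_val. destruct (sr_fr_ge k) as [H _].
  pose proof (pos_INR k). pose proof (pow10_lin (sr k)). lra.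
Qed.

Lemma num_val k : IZR (num k) = pow10 (sr k) * sum_f_R0 u k.
Proof.
  assert (Hterm : forall n, pow10 (sr n) * u n = IZR (a n)).
  { intros n. unfold u. rewrite Rmult_comm, Rmult_assoc, <- pow10_plus.
    replace (- sr n + sr n) with 0 by ring. rewrite pow10_0. ring. }
  induction k as [| k IH].
  - simpl. rewrite Hterm. reflexivity.
  - assert (Hgap : (0 <= sseq nu (S k) - sseq nu k)%Z).
    { apply le_IZR. rewrite minus_IZR. pose proof (sr_mono k (S k) ltac:(lia)).
      pose proof (pos_INR (S k - k)). unfold sr in *. lra. }
    cbn [num]. rewrite plus_IZR, mult_IZR, IH, IZR_Zpow10, minus_IZR by exact Hgap.
    fold (sr (S k)) (sr k).
    change (sum_f_R0 u (S k)) with (sum_f_R0 u k + u (S k)).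
    assert (E : pow10 (sr (S k)) = pow10 (sr k) * pow10 (sr (S k) - sr k))
      by (rewrite <- pow10_plus; f_equal; ring).
    rewrite Rmult_plus_distr_l, Hterm, E. ring.
Qed.

Lemma xi_minus_convergent k : xi - IZR (num k) / IZR (den k) = tail k.
Proof.
  rewrite num_val, den_val.
  replace (pow10 (sr k) * sum_f_R0 u k / pow10 (sr k)) with (sum_f_R0 u k)
    by (field; apply Rgt_not_eq, pow10_pos).
  unfold xi, tail. rewrite (Series_incr_n u (S k)) by (lia || apply ex_series_u).
  simpl pred. ring.
Qed.

(* |xi - num_k/den_k| <= 3 10^(-s_{k+1}) < 10^(1 - s_{k+1}) = den_k^(-fr_k). *)
Lemma convergent_approx k : approx xi (num k) (den k) (fr k).
Proof.
  unfold approx. rewrite xi_minus_convergent, den_val, Rpower_pow10.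
  destruct (tail_bounds k) as [H1 H2]. pose proof (pow10_pos (- sr (S k))).
  rewrite Rabs_pos_eq by lra. split; [lra |].
  replace (sr k * - fr k) with (1 + - sr (S k)) by (rewrite sr_S; ring).
  rewrite pow10_plus, pow10_1. lra.
Qed.

(* fr_k / den_k^ns >= 10^((nu - ns) s_k) - 1 >= (nu - ns) k. *)
Lemma Sset_below ns : 0 <= ns < nu -> Sset xi ns.
Proof.
  intros [H0 H1]. split; [exact H0 |].
  exists num, den, fr. split; [exact den_gt1 | split; [| split; [exact convergent_approx |]]].
  - intros k. destruct (sr_fr_ge k). lra.
  - apply (diverges_of_linear_lower_bound _ (nu - ns)); [lra |]. intros k.
    rewrite den_val, Rpower_pow10.
    destruct (fr_bounds k) as [Hf _]. destruct (sr_fr_ge k) as [Hs _].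
    pose proof (pos_INR k).
    set (X := pow10 (sr k * ns)). set (Y := pow10 ((nu - ns) * sr k)).
    assert (EXY : pow10 (nu * sr k) = X * Y)
      by (unfold X, Y; rewrite <- pow10_plus; f_equal; ring).
    assert (HX : 1 <= X).
    { assert (Hsn : 0 <= sr k * ns) by (apply Rmult_le_pos; lra).
      pose proof (pow10_lin _ Hsn). unfold X; lra. }
    assert (HY : 1 + (nu - ns) * sr k <= Y).
    { apply pow10_lin, Rmult_le_pos; lra. }
    apply (Rmult_le_reg_r X); [lra |].
    replace (fr k / X * X) with (fr k) by (field; lra).
    assert ((nu - ns) * INR k <= Y - 1) by nra.
    nra.
Qed.

(* If 10^(gap_j) >= 6q then xi lies so close to the j-th convergent that any
   other fraction p/q is at distance >= 1/(2 q den_j) from xi. *)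
Lemma far_from_other_fractions (p q : Z) j :
  (1 < q)%Z -> 6 * IZR q <= pow10 (gap j) ->
  IZR p / IZR q <> IZR (num j) / IZR (den j) ->
  1 / (2 * IZR q * pow10 (sr j)) <= Rabs (xi - IZR p / IZR q).
Proof.
  intros Hq H6 Hne. pose proof (den_gt1 j) as Hd.
  pose proof (distinct_fractions_apart p q (num j) (den j) ltac:(lia) ltac:(lia) Hne) as Hsep.
  apply IZR_lt in Hq. rewrite den_val in Hsep.
  set (Q := IZR q) in *. set (D := pow10 (sr j)) in *.
  assert (HD : 0 < D) by apply pow10_pos.
  assert (Hclose : Rabs (xi - IZR (num j) / IZR (den j)) <= 1 / (2 * Q * D)).
  { rewrite xi_minus_convergent. destruct (tail_bounds j) as [T1 T2].
    pose proof (pow10_pos (- sr (S j))).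
    rewrite Rabs_pos_eq by lra.
    replace (- sr (S j)) with (- sr j + - gap j) in T2 by (unfold gap; ring).
    rewrite pow10_plus, !pow10_opp in T2. fold D in T2.
    pose proof (pow10_pos (gap j)).
    assert (/ pow10 (gap j) <= / (6 * Q)) by (apply Rinv_le_contravar; lra).
    assert (/ D * / pow10 (gap j) <= / D * / (6 * Q))
      by (apply Rmult_le_compat_l; [left; apply Rinv_0_lt_compat |]; lra).
    replace (1 / (2 * Q * D)) with (3 * (/ D * / (6 * Q))) by (field; lra). lra. }
  rewrite den_val in Hclose. fold D in Hclose.
  pose proof (Rabs_triang_inv (IZR p / Q - IZR (num j) / D) (xi - IZR (num j) / D)).
  replace (IZR p / Q - IZR (num j) / D - (xi - IZR (num j) / D))
    with (- (xi - IZR p / Q)) in H by ring.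
  rewrite Rabs_Ropp in H.
  replace (1 / (Q * D)) with (2 * (1 / (2 * Q * D))) in Hsep by (field; lra).
  lra.
Qed.

(* Hence, if 10^(gap_j) >= 6q, every fraction p/q is at distance
   >= 1/(2 q den_{j+1}) from xi (for p/q equal to the j-th convergent, the
   distance is the j-th tail, itself >= 1/den_{j+1}). *)
Lemma fraction_distance_lower (p q : Z) j :
  (1 < q)%Z -> 6 * IZR q <= pow10 (gap j) ->
  1 / (2 * IZR q * pow10 (sr (S j))) <= Rabs (xi - IZR p / IZR q).
Proof.
  intros Hq H6. pose proof Hq as Hq'. apply IZR_lt in Hq'.
  pose proof (pow10_pos (sr (S j))) as HS.
  destruct (Req_dec (IZR p / IZR q) (IZR (num j) / IZR (den j))) as [E | E].
  - rewrite E, xi_minus_convergent. destruct (tail_bounds j) as [T _].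
    rewrite pow10_opp in T. rewrite Rabs_pos_eq.
    + eapply Rle_trans; [| exact T]. unfold Rdiv. rewrite Rmult_1_l.
      apply Rinv_le_contravar; [exact HS |]. nra.
    + pose proof (Rinv_0_lt_compat _ HS). lra.
  - eapply Rle_trans; [| exact (far_from_other_fractions p q j Hq H6 E)].
    pose proof (sr_mono j (S j) ltac:(lia)). pose proof (pos_INR (S j - j)).
    pose proof (pow10_le (sr j) (sr (S j)) ltac:(lra)). pose proof (pow10_pos (sr j)).
    unfold Rdiv. rewrite !Rmult_1_l. apply Rinv_le_contravar; [nra |].
    apply Rmult_le_compat_l; lra.
Qed.

(* Combining: any admissible exponent w for p/q satisfies
   w < 2 + 4 s_{j+1} <= (2 + 4 M) q^ns. *)
Lemma approx_exponent_bounded ns : nu < ns ->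
  exists C, forall p q w, (1 < q)%Z -> approx xi p q w ->
    w <= C * Rpower (IZR q) ns.
Proof.
  intros Hns. destruct (exponent_at_least_index_bounded ns Hns) as [M HM].
  exists (2 + 4 * M). intros p q w Hq [_ Ha].
  destruct (gap_unbounded (6 * IZR q)) as [N HN].
  pose proof (pow10_lin (gap N)).
  assert (HN' : 6 * IZR q <= pow10 (gap N)).
  { assert (0 < IZR q) by (apply IZR_lt; lia). lra. }
  destruct (least_index (fun j => 6 * IZR q <= pow10 (gap j)) N) as [j [Hj Hmin]];
    [intros n; destruct (Rle_dec (6 * IZR q) (pow10 (gap n))); auto | exact HN' |].
  pose proof (fraction_distance_lower p q j Hq Hj) as Hdist.
  destruct (sr_fr_ge (S j)) as [Hs _]. pose proof (pos_INR (S j)).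
  pose proof (exponent_bound q w (sr (S j)) Hq ltac:(lra) ltac:(lra)).
  pose proof (HM q j Hq Hmin).
  assert (HR : 1 <= Rpower (IZR q) ns).
  { assert (1 < IZR q) by (apply IZR_lt; lia).
    rewrite <- (Rpower_O (IZR q)) by lra. apply Rle_Rpower; lra. }
  nra.
Qed.

Lemma Sset_above ns : nu < ns -> ~ Sset xi ns.
Proof. intros Hns. apply not_Sset_of_uniform_bound, approx_exponent_bounded, Hns. Qed.

End Construction.

Theorem mainTheorem1 (nu : R) (hnu : 0 < nu) (a : nat -> Z)
  (ha : forall n, a n = 1%Z \/ a n = 2%Z) :
  nu_Liouville nu
    (Series (fun n => IZR (a n) * Rpower 10 (- IZR (sseq nu n)))).
Proof.
  change (Series (fun n => IZR (a n) * Rpower 10 (- IZR (sseq nu n)))) with (xi nu a).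
  split.
  - apply Liouville_of_Sset_0, Sset_below; auto; lra.
  - apply is_lub_of_bounds; [exact hnu | |].
    + intros x Hx. now apply Sset_below.
    + intros x Hx. destruct (Rle_lt_dec x nu) as [h | h]; [exact h |].
      exfalso. exact (Sset_above nu hnu a ha x h Hx).
Qed.
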